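(* Let $s\ge2$, let $H$ be a graph, let $k\ge s+1$ and $n\ge s+2$, and let $\{S_X: X\subseteq\{1,\dots,n\},\ |X|=s\}$ be pairwise distinct $(k-1)$-cliques of $H$ such that for every $(s+1)$-subset $A\subseteq\{1,\dots,n\}$ there is a $k$-clique $Q_A$ of $H$ which contains $S_X$ for every $s$-subset $X\subseteq A$ and contains no $S_Y$ with $Y\not\subseteq A$. Then there exist a $(k-s-1)$-clique $T$ of $H$ and pairwise distinct vertices $x_1,\dots,x_n\in V(H)\setminus T$ such that \[ S_X=T\cup\{x_i: i\in X\}\qquad\text{for every $s$-subset } X\subseteq\{1,\dots,n\}. \]
   Context: All graphs are finite, simple, undirected. A $k$-clique of a graph $H$ is a set of $k$ pairwise adjacent vertices of $H$ (a $0$-clique is the empty set). *)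

From mathcomp Require Import all_boot.
Set Implicit Arguments. Unset Strict Implicit. Unset Printing Implicit Defensive.

Definition simple_graph (V : finType) (e : rel V) : Prop :=
  symmetric e /\ irreflexive e.

Definition is_clique (V : finType) (e : rel V) (K : {set V}) : Prop :=
  forall x y, x \in K -> y \in K -> x != y -> e x y.

Definition is_kclique (V : finType) (e : rel V) (k : nat) (K : {set V}) : Prop :=
  is_clique e K /\ #|K| = k.

From mathcomp Require Import all_boot zify.
Set Implicit Arguments. Unset Strict Implicit. Unset Printing Implicit Defensive.

(* For an s-set C, i in C and a outside C, the cliques S_C and S_(C-i+a) are two
   distinct (k-1)-subsets of the k-clique Q_(C+a), so exactly one vertex of S_C
   is lost when i is swapped for a.  This vertex does not depend on a: the clique
   Q_(C-i+a+b) omits some vertex of S_C, which therefore lies in the losses for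
   both a and b.  Nor does it change when another j in C is swapped for a, since
   both losses equal Q_(C+a) minus S_(C-i+a).  Connecting any two s-sets through i
   by such swaps, the lost vertex x_i depends on i alone, and x_i lies in S_X
   exactly when i is in X.  Hence S_X minus {x_i : i in X} is a core T that
   survives every swap and is thus common to all S_X. *)

Section FinsetExchange.
Variable T : finType.
Implicit Types (A B C Q X Y Z : {set T}) (a i j : T).

Lemma exists_subset_card A m : m <= #|A| -> exists2 B : {set T}, B \subset A & #|B| = m.
Proof.
case/card_geqP=> r [uniq_r size_r /subsetP r_sub].
exists [set x in r]; last by rewrite cardsE (card_uniqP uniq_r).
by apply: subset_trans r_sub; apply/subsetP=> x; rewrite inE.
Qed.

Lemma cards_exchange C i a : i \in C -> a \notin C -> #|a |: (C :\ i)| = #|C|.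
Proof. by move=> iC aC; rewrite cardsU1 (cardsD1 i C) iC !inE (negbTE aC) andbF. Qed.

Lemma cardsU1_notin C a : a \notin C -> #|a |: C| = #|C|.+1.
Proof. by move=> aC; rewrite cardsU1 aC. Qed.

Lemma exchange_neq C i a : a \notin C -> C != a |: (C :\ i).
Proof. by move=> aC; apply/eqP=> /setP/(_ a); rewrite !inE eqxx (negbTE aC). Qed.

Lemma exchange_subU1 C i a : a |: (C :\ i) \subset a |: C.
Proof. by apply: setUS; apply: subD1set. Qed.

Lemma cards_setD_cover B Q : #|Q| = #|B|.+1 -> B \subset Q -> #|Q :\: B| = 1.
Proof. by move=> cardQ BQ; rewrite cardsD (setIidPr BQ) cardQ subSnn. Qed.

Lemma setD_cover A B Q :
  #|A| = #|B| -> #|Q| = #|B|.+1 -> A \subset Q -> B \subset Q -> A != B ->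
  A :\: B = Q :\: B.
Proof.
move=> cardAB cardQ AQ BQ neqAB.
have : 0 < #|A :\: B|.
  rewrite card_gt0 setD_eq0; apply: contraNN neqAB => AB.
  by rewrite eqEcard AB cardAB /=.
by move=> pos; apply/eqP; rewrite eqEcard setSD // cards_setD_cover.
Qed.

Lemma exchange_ind (P : {set T} -> Prop) X Y :
  #|X| = #|Y| ->
  (forall Z j a, #|Z| = #|Y| -> j \in Z -> j \notin Y -> a \notin Z -> a \in Y ->
     P Z -> P (a |: (Z :\ j))) ->
  P X -> P Y.
Proof.
move=> cardXY step; move hm: #|X :\: Y| => m.
elim: m X hm cardXY => [|m IH] X hm cardXY PX.
  suff -> : Y = X by [].
  apply/eqP; rewrite eq_sym eqEcard cardXY leqnn andbT -setD_eq0.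
  by rewrite -cards_eq0 hm.
have /set0Pn [j] : X :\: Y != set0 by rewrite -card_gt0 hm.
rewrite inE => /andP [jY jX].
have /set0Pn [a] : Y :\: X != set0.
  rewrite -card_gt0 cardsD -cardXY (setIC Y) -cardsD hm //.
rewrite inE => /andP [aX aY].
apply: (IH (a |: (X :\ j))); last 2 first.
- by rewrite cards_exchange.
- by apply: step.
have -> : (a |: (X :\ j)) :\: Y = (X :\: Y) :\ j.
  apply/setP=> z; rewrite !inE; case: (z =P a) => [->|_] /=; first by rewrite aY andbF.
  by case: (z == j); case: (z \in Y); case: (z \in X).
by move: hm; rewrite (cardsD1 j (X :\: Y)) !inE jY jX /= add1n => -[].
Qed.

Lemma exchangeK C i a : i \in C -> a \notin C -> i |: ((a |: (C :\ i)) :\ a) = C.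
Proof.
move=> iC aC; apply/setP=> z; rewrite !inE.
case: (z =P i) => [->|_] /=; first by rewrite iC.
by case: (z =P a) => [->|_] //=; rewrite (negbTE aC).
Qed.

Lemma exchangeC C i j a :
  i \in C -> j \in C -> i != j -> a \notin C ->
  j |: ((a |: (C :\ j)) :\ i) = a |: (C :\ i).
Proof.
move=> iC jC ij aC; apply/setP=> z; rewrite !inE.
case: (z =P j) => [->|_] /=; first by rewrite jC (eq_sym j i) ij orbT.
by case: (z =P a) => [->|_] //=; rewrite eq_sym (memPn aC).
Qed.

Lemma eq_cards1 A B a : #|A| = 1 -> #|B| = 1 -> a \in A -> a \in B -> A = B.
Proof.
move=> /eqP/cards1P [u ->] /eqP/cards1P [w ->].
by rewrite !inE => /eqP -> /eqP ->.
Qed.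

End FinsetExchange.

Section SwapLoss.
Variables (V : finType) (n s m : nat) (S Q : {set 'I_n} -> {set V}).
Implicit Types (A C X Y Z : {set 'I_n}) (a b i j : 'I_n).

Hypothesis s_gt0 : 0 < s.
Hypothesis s_lt_n : s < n.
Hypothesis card_S : forall X, #|X| = s -> #|S X| = m.
Hypothesis S_inj : forall X Y, #|X| = s -> #|Y| = s -> X != Y -> S X != S Y.
Hypothesis card_Q : forall A, #|A| = s.+1 -> #|Q A| = m.+1.
Hypothesis S_sub_Q :
  forall A X, #|A| = s.+1 -> #|X| = s -> X \subset A -> S X \subset Q A.
Hypothesis S_notsub_Q :
  forall A Y, #|A| = s.+1 -> #|Y| = s -> ~~ (Y \subset A) -> ~~ (S Y \subset Q A).

Lemma exists_notin X : #|X| = s -> exists a, a \notin X.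
Proof.
move=> cardX; have /set0Pn [a] : ~: X != set0.
  by rewrite -card_gt0 cardsCs setCK card_ord cardX subn_gt0.
by rewrite inE; exists a.
Qed.

Lemma exists_mem_notin i j : i != j -> exists X, [/\ #|X| = s, i \in X & j \notin X].
Proof.
move=> ij; have [|B B_sub cardB] := @exists_subset_card _ (~: [set i; j]) s.-1.
  by rewrite cardsCs setCK cards2 ij card_ord; lia.
have [iB jB] : i \notin B /\ j \notin B.
  by split; apply/negP=> /(subsetP B_sub); rewrite !inE eqxx ?orbT.
exists (i |: B); split; first by rewrite cardsU1 iB cardB; lia.
  by rewrite setU11.
by rewrite !inE negb_or eq_sym ij.
Qed.

Lemma S_setD_Q A X Y :
  #|A| = s.+1 -> #|X| = s -> #|Y| = s -> X \subset A -> Y \subset A -> X != Y ->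
  S X :\: S Y = Q A :\: S Y.
Proof.
move=> cardA cardX cardY XA YA XY.
by apply: setD_cover; rewrite ?S_sub_Q ?card_S ?card_Q ?S_inj.
Qed.

Definition swap_loss C i a := S C :\: S (a |: (C :\ i)).

Lemma swap_loss_Q C i a :
  #|C| = s -> i \in C -> a \notin C ->
  swap_loss C i a = Q (a |: C) :\: S (a |: (C :\ i)).
Proof.
move=> cardC iC aC; apply: S_setD_Q;
  by rewrite ?cards_exchange ?cardsU1_notin ?cardC ?subsetUr ?exchange_subU1 ?exchange_neq.
Qed.

Lemma card_swap_loss C i a : #|C| = s -> i \in C -> a \notin C -> #|swap_loss C i a| = 1.
Proof.
move=> cardC iC aC; rewrite swap_loss_Q // cards_setD_cover //.
  by rewrite card_Q ?card_S ?cards_exchange ?cardsU1_notin ?cardC.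
by rewrite S_sub_Q ?cards_exchange ?cardsU1_notin ?cardC ?exchange_subU1.
Qed.

Lemma swap_loss_indep C i a b :
  #|C| = s -> i \in C -> a \notin C -> b \notin C -> a != b ->
  swap_loss C i a = swap_loss C i b.
Proof.
move=> cardC iC aC bC ab; set A := a |: (b |: (C :\ i)).
have cardA : #|A| = s.+1.
  by rewrite cardsU1_notin ?cards_exchange ?cardC // !inE negb_or ab (negbTE aC) andbF.
have /subsetPn [v vSC vQ] : ~~ (S C \subset Q A).
  apply: S_notsub_Q => //; apply/subsetPn; exists i => //.
  by rewrite !inE eqxx orbF negb_or (memPn aC) ?(memPn bC).
have v_loss c : c \notin C -> c |: (C :\ i) \subset A -> v \in swap_loss C i c.
  move=> cC cA; rewrite inE vSC andbT; apply: contra vQ.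
  by apply/subsetP; rewrite S_sub_Q ?cards_exchange.
apply: (eq_cards1 (a := v)); rewrite ?card_swap_loss ?v_loss //.
  by rewrite setUS // subsetUr.
exact: subsetUr.
Qed.

Lemma swap_loss_exchange C i j a :
  #|C| = s -> i \in C -> j \in C -> i != j -> a \notin C ->
  swap_loss C i a = swap_loss (a |: (C :\ j)) i j.
Proof.
move=> cardC iC jC ij aC; rewrite swap_loss_Q // /swap_loss exchangeC //.
apply/esym/S_setD_Q; rewrite ?cards_exchange ?cardsU1_notin ?cardC ?exchange_subU1 //.
apply/eqP=> /setP/(_ i); rewrite !inE eqxx iC ij /= orbT orbF => /esym/eqP ia.
by move: aC; rewrite -ia iC.
Qed.

Lemma swap_loss_const i : exists v, forall C a,
  #|C| = s -> i \in C -> a \notin C -> swap_loss C i a = [set v].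
Proof.
have /set0Pn [j] : [set~ i] != set0.
  by rewrite -card_gt0 cardsC1 card_ord; lia.
rewrite !inE eq_sym => ij.
have [C0 [cardC0 iC0 jC0]] := exists_mem_notin ij.
have /eqP/cards1P [v loss0] := card_swap_loss cardC0 iC0 jC0.
exists v => C a cardC iC.
pose P Z := i \in Z /\ forall a, a \notin Z -> swap_loss Z i a = [set v].
suff [_ lossC] : P C by apply: lossC.
apply: (exchange_ind (X := C0)); first by rewrite cardC0 cardC.
  move=> Z k b; rewrite cardC => cardZ kZ kC bZ _ [iZ lossZ].
  have ik : i != k by apply: contraNneq kC => <-.
  have kZ' : k \notin b |: (Z :\ k) by rewrite !inE eqxx orbF; apply: contraNneq bZ => <-.
  have lossZ' : swap_loss (b |: (Z :\ k)) i k = [set v].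
    by rewrite -swap_loss_exchange ?lossZ.
  have iZ' : i \in b |: (Z :\ k) by rewrite !inE iZ ik orbT.
  split=> // c cZ'.
  have [-> //|ck] := eqVneq c k.
  by rewrite (swap_loss_indep _ _ cZ' kZ') ?cards_exchange.
split=> // c cC0; have [-> //|cj] := eqVneq c j.
by rewrite (swap_loss_indep _ _ cC0 jC0).
Qed.

Section IndexVertices.
Variable x : 'I_n -> V.
Hypothesis swap_loss_x :
  forall i C a, #|C| = s -> i \in C -> a \notin C -> swap_loss C i a = [set x i].

Lemma mem_vertex_S i X : #|X| = s -> (x i \in S X) = (i \in X).
Proof.
move=> cardX; have [iX|iX] := boolP (i \in X).
  have [a aX] := exists_notin cardX.
  by have := set11 (x i); rewrite -(swap_loss_x cardX iX aX) inE => /andP [].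
have /set0Pn [j jX] : X != set0 by rewrite -card_gt0 cardX.
have ij : i != j by apply: contraNneq iX => ->.
have jX' : j \notin i |: (X :\ j) by rewrite !inE eqxx orbF eq_sym.
have := set11 (x i); rewrite -(swap_loss_x _ _ jX') ?cards_exchange ?setU11 //.
by rewrite /swap_loss exchangeK // inE => /andP [/negbTE].
Qed.

Lemma vertex_inj : injective x.
Proof.
move=> i j xij; apply/eqP/contraT => ij.
have [X [cardX iX jX]] := exists_mem_notin ij.
by move: iX jX; rewrite -!(mem_vertex_S _ cardX) xij => ->.
Qed.

Lemma vertex_image_sub_S X : #|X| = s -> x @: X \subset S X.
Proof. by move=> cardX; apply/subsetP=> _ /imsetP [i iX ->]; rewrite mem_vertex_S. Qed.

Section Core.
Variable X0 : {set 'I_n}.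
Hypothesis cardX0 : #|X0| = s.

Definition core := S X0 :\: x @: X0.

Lemma card_core : #|core| = m - s.
Proof.
rewrite cardsD (setIidPr (vertex_image_sub_S cardX0)) card_imset ?card_S ?cardX0 //.
exact: vertex_inj.
Qed.

Lemma vertex_notin_core i : x i \notin core.
Proof.
rewrite inE negb_and negbK mem_vertex_S // orbC.
by case iX0 : (i \in X0) => //=; apply: imset_f.
Qed.

(* Swapping j out loses only x j, which is not in the core. *)
Lemma core_sub_S Y : #|Y| = s -> core \subset S Y.
Proof.
move=> cardY; apply: (exchange_ind (P := fun Z => core \subset S Z) (X := X0)).
- by rewrite cardX0 cardY.
- move=> Z j a; rewrite cardY => cardZ jZ _ aZ _ coreZ; apply/subsetP=> t tcore.
  apply/contraT=> tZ'; have : t \in swap_loss Z j a by rewrite inE tZ' (subsetP coreZ).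
  rewrite swap_loss_x // inE => /eqP tx.
  by move: tcore; rewrite tx (negbTE (vertex_notin_core j)).
- exact: subsetDl.
Qed.

Lemma S_core X : #|X| = s -> S X = core :|: x @: X.
Proof.
move=> cardX; apply/eqP.
rewrite eq_sym eqEcard subUset core_sub_S // vertex_image_sub_S //=.
have core_disj : core :&: x @: X = set0.
  apply/setP=> t; rewrite in_setI in_set0; apply/andP=> -[tcore /imsetP [i _ ti]].
  by move: tcore; rewrite ti (negbTE (vertex_notin_core i)).
have s_le_m : s <= m.
  rewrite -(card_S cardX) -{1}cardX -(card_imset _ vertex_inj).
  by rewrite subset_leq_card // vertex_image_sub_S.
rewrite cardsU core_disj cards0 subn0 card_core card_imset ?cardX ?card_S ?subnK //.
exact: vertex_inj.
Qed.

End Core.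
End IndexVertices.

Lemma sunflower_of_covers : exists (T : {set V}) (x : 'I_n -> V),
  [/\ #|T| = m - s, injective x, forall i, x i \notin T &
      forall X, #|X| = s -> S X = T :|: x @: X].
Proof.
have [x swap_loss_x] := fin_all_exists swap_loss_const.
have [|X0 _ cardX0] := @exists_subset_card _ [set: 'I_n] s.
  by rewrite cardsT card_ord ltnW.
exists (core x X0), x; split; first exact: card_core.
- exact: vertex_inj.
- exact: vertex_notin_core.
- exact: S_core.
Qed.

End SwapLoss.

Lemma is_clique_sub (V : finType) (e : rel V) (K L : {set V}) :
  K \subset L -> is_clique e L -> is_clique e K.
Proof. by move=> KL cliqueL x y xK yK; apply: cliqueL; apply: (subsetP KL). Qed.

Theorem lemma4p20 (V : finType) (e : rel V) (s k n : nat)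
  (S : {set 'I_n} -> {set V}) :
  simple_graph e ->
  2 <= s -> s + 1 <= k -> s + 2 <= n ->
  (forall X : {set 'I_n}, #|X| = s -> is_kclique e (k - 1) (S X)) ->
  (forall X Y : {set 'I_n}, #|X| = s -> #|Y| = s -> X != Y -> S X != S Y) ->
  (forall A : {set 'I_n}, #|A| = s + 1 ->
     exists Q : {set V}, is_kclique e k Q /\
       (forall X : {set 'I_n}, #|X| = s -> X \subset A -> S X \subset Q) /\
       (forall Y : {set 'I_n}, #|Y| = s -> ~~ (Y \subset A) -> ~~ (S Y \subset Q))) ->
  exists (T : {set V}) (x : 'I_n -> V),
    is_kclique e (k - s - 1) T /\
    injective x /\
    (forall i, x i \notin T) /\
    (forall X : {set 'I_n}, #|X| = s -> S X = T :|: x @: X).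
Proof.
move=> _ s_ge2 s_lt_k s2_le_n clique_S S_inj exists_Q.
have Q_of (A : {set 'I_n}) : exists Q : {set V}, #|A| = s.+1 ->
    [/\ #|Q| = (k - 1).+1,
        forall X : {set 'I_n}, #|X| = s -> X \subset A -> S X \subset Q &
        forall Y : {set 'I_n}, #|Y| = s -> ~~ (Y \subset A) -> ~~ (S Y \subset Q)].
  have [cardA|neqA] := eqVneq #|A| s.+1.
    have [Q [[_ cardQ] [S_sub S_notsub]]] := exists_Q A (etrans cardA (esym (addn1 s))).
    by exists Q; split; rewrite // cardQ subn1 prednK //; lia.
  by exists set0 => /eqP; rewrite (negbTE neqA).
have [Q Q_spec] := fin_all_exists Q_of.
have [|||||||T [x [cardT x_inj xT S_eq]]] := @sunflower_of_covers V n s (k - 1) S Q.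
- lia.
- lia.
- by move=> X /clique_S [].
- exact: S_inj.
- by move=> A /Q_spec [].
- by move=> A X /Q_spec [_ S_sub _]; apply: S_sub.
- by move=> A Y /Q_spec [_ _ S_notsub]; apply: S_notsub.
have [|X0 _ cardX0] := @exists_subset_card _ [set: 'I_n] s.
  by rewrite cardsT card_ord; lia.
exists T, x; split=> //; split; last by rewrite cardT; lia.
apply: (is_clique_sub (L := S X0)); first by rewrite S_eq // subsetUl.
by have [] := clique_S X0 cardX0.
Qed.
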